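(* For $i\in\{1,2\}$ let $\Sigma_{i,\mathbb{T}}$ be the linear time-varying system $x_i(t+1)=A_i(t)x_i(t)+B_i(t)u_i(t)$, $y_i(t)=C_i(t)x_i(t)+D_i(t)u_i(t)$, $t\in\mathbb{T}=\{0,\dots,T-1\}$, with $u_i(t)\in\mathbb{R}^{n_u}$, $y_i(t)\in\mathbb{R}^{n_y}$ and initial state $x_i(0)=x_{i0}$, with admissible behavior $\mathcal{B}_{i,x_{i0}}$. Suppose: (C1) for each $i$, test inputs $\mathbf{u}_i^0,\dots,\mathbf{u}_i^{n_uT}\in\mathbb{R}^{n_uT}$ are applied from $x_{i0}$ with outputs $\mathbf{y}_i^k$, where $\mathbf{u}_i^0=0$ and $\operatorname{rank}[\mathbf{u}_i^1,\dots,\mathbf{u}_i^{n_uT}]=n_uT$; with $w_i^k=\operatorname{col}(\mathbf{u}_i^k,\mathbf{y}_i^k)$ and $W_i=[w_i^1-w_i^0,\dots,w_i^{n_uT}-w_i^0]$; (C2) $H_i\in\mathbb{R}^{n_wT\times n_uT}$ is a matrix whose columns form an orthonormal basis of $\operatorname{span}(W_i)$; (C3) there exist $l_1,l_2\in\mathbb{R}^{n_uT}$ with $H_1l_1+H_2l_2=w_2^0-w_1^0$; (C4) $H_1^{\rm T}H_2=UDV^{\rm T}$ is a singular value decomposition with $U,V$ orthogonal and $D=\operatorname{diag}(s_1,\dots,s_{n_uT})$, $s_1\ge\dots\ge s_{n_uT}>0$. Let $w_g\in\mathcal{B}_{2,x_{20}}$, let $\overline{g}\in\mathbb{R}^{n_uT}$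 satisfy $w_g=H_2V\overline{g}+w_2^0$, and define $w_h=H_1UD\overline{g}+P_{\operatorname{span}(H_1)}(w_2^0-w_1^0)+w_1^0$. Then $w_h\in\mathcal{B}_{1,x_{10}}$ and $\|w_h-w_g\|=\min_{w\in\mathcal{B}_{1,x_{10}}}\|w-w_g\|$.
   Context: $n_w=n_u+n_y$. Supervectors over $\mathbb{T}$: $\mathbf{u}_i=[u_i(0)^{\rm T},\dots,u_i(T-1)^{\rm T}]^{\rm T}$, likewise $\mathbf{y}_i,\mathbf{x}_i$. The admissible behavior $\mathcal{B}_{i,x_{i0}}\subseteq\mathbb{R}^{n_wT}$ is the set of all $\operatorname{col}(\mathbf{u}_i,\mathbf{y}_i)$ for which there exists a state supervector $\mathbf{x}_i$ with $x_i(0)=x_{i0}$ such that $(\mathbf{u}_i,\mathbf{y}_i,\mathbf{x}_i)$ satisfies the system equations; $\mathbf{y}_i^k$ is the output supervector under input $\mathbf{u}_i^k$ from $x_{i0}$. $P_{\operatorname{span}(H_1)}$ denotes the orthogonal projection of $\mathbb{R}^{n_wT}$ onto $\operatorname{span}(H_1)$ (with respect to the standard inner product), and $\|\cdot\|$ is the Euclidean norm. *)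

From HB Require Import structures.
From mathcomp Require Import all_boot all_order all_algebra.
From mathcomp Require Import reals.
From Stdlib Require Import ClassicalEpsilon.
Set Implicit Arguments. Unset Strict Implicit. Unset Printing Implicit Defensive.
Import Order.TTheory GRing.Theory Num.Theory.
Local Open Scope ring_scope.

(* Supervector [v(0); ...; v(T-1)] of a signal v : nat -> 'cV_n, in 'cV_(T*n).
   mxvec is row-major, so entry (t,j) sits at index t*n + j. *)
Definition supervec (R : realType) (T n : nat) (v : nat -> 'cV[R]_n) : 'cV[R]_(T * n) :=
  (mxvec (\matrix_(t < T, j < n) v t j 0))^T.

Definition behavior (R : realType) (T nu ny nx : nat)
  (A : nat -> 'M[R]_nx) (B : nat -> 'M[R]_(nx, nu))
  (C : nat -> 'M[R]_(ny, nx)) (D : nat -> 'M[R]_(ny, nu))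
  (x0 : 'cV[R]_nx) (w : 'cV[R]_(T * nu + T * ny)) : Prop :=
  exists (u : nat -> 'cV[R]_nu) (y : nat -> 'cV[R]_ny) (x : nat -> 'cV[R]_nx),
    w = col_mx (supervec T u) (supervec T y) /\ x 0%N = x0 /\
    forall t : nat, (t < T)%N ->
      x t.+1 = A t *m x t + B t *m u t /\ y t = C t *m x t + D t *m u t.

Definition enorm (R : realType) (n : nat) (v : 'cV[R]_n) : R :=
  Num.sqrt (\sum_(i < n) v i 0 ^+ 2).

Definition proj_span (R : realType) (n m : nat) (M : 'M[R]_(n, m)) (v : 'cV[R]_n)
  : 'cV[R]_n :=
  epsilon (inhabits 0)
    (fun p : 'cV[R]_n => (exists a : 'cV[R]_m, p = M *m a) /\ M^T *m (v - p) = 0).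

Definition colmat (R : realType) (n N : nat) (f : nat -> 'cV[R]_n) : 'M[R]_(n, N) :=
  \matrix_(r < n, k < N) f k r 0.

(* The behavior of a linear system from a fixed initial state is an affine
   space over the zero-state behavior, and a zero-state trajectory is
   determined by its input.  Since the test inputs span the input space, the
   behavior of system 1 is exactly w10 + span(H1).  As H1^T H2 V = U D, the
   vector wh is w10 plus the orthogonal projection of wg - w10 onto span(H1),
   so wh - wg is orthogonal to span(H1) and Pythagoras gives minimality. *)

From HB Require Import structures.
From mathcomp Require Import all_boot all_order all_algebra.
From mathcomp Require Import reals.
From Stdlib Require Import ClassicalEpsilon.
Import Order.TTheory GRing.Theory Num.Theory.
Local Open Scope ring_scope.

Section Supervec.
Variables (R : realType) (T n : nat).

Lemma supervec_linear (a : R) (u u' : nat -> 'cV[R]_n) :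
  supervec T (fun t => a *: u t + u' t) = a *: supervec T u + supervec T u'.
Proof.
rewrite /supervec -!linearZ -!linearD /=; congr (mxvec _)^T.
by apply/matrixP => t j; rewrite !mxE.
Qed.

Lemma supervec_eq0 (u : nat -> 'cV[R]_n) :
  supervec T u = 0 <-> forall t, (t < T)%N -> u t = 0.
Proof.
rewrite /supervec; split => [/eqP | u0].
  rewrite trmx_eq0 mxvec_eq0 => /eqP M0 t ltT; apply/matrixP => j k.
  have := congr1 (fun M : 'M[R]_(T, n) => M (Ordinal ltT) j) M0.
  by rewrite ord1 !mxE.
apply/eqP; rewrite trmx_eq0 mxvec_eq0; apply/eqP/matrixP => t j.
by rewrite !mxE u0 ?mxE.
Qed.

End Supervec.
Arguments supervec_eq0 {R T n u}.

Section Behavior.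
Variables (R : realType) (T nu ny nx : nat)
  (A : nat -> 'M[R]_nx) (B : nat -> 'M[R]_(nx, nu))
  (C : nat -> 'M[R]_(ny, nx)) (D : nat -> 'M[R]_(ny, nu)).

Local Notation behavior := (behavior A B C D).
Local Notation signal := 'cV[R]_(T * nu + T * ny).

Lemma behavior_linear (a : R) {x0 x0' : 'cV[R]_nx} {w w' : signal} :
  behavior x0 w -> behavior x0' w' -> behavior (a *: x0 + x0') (a *: w + w').
Proof.
move=> [u [y [x [-> [x_0 sys]]]]] [u' [y' [x' [-> [x'_0 sys']]]]].
exists (fun t => a *: u t + u' t), (fun t => a *: y t + y' t),
  (fun t => a *: x t + x' t).
split; first by rewrite !supervec_linear scale_col_mx add_col_mx.
split; first by rewrite x_0 x'_0.
move=> t ltT; have [-> ->] := sys t ltT; have [-> ->] := sys' t ltT.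
by rewrite !mulmxDr -!scalemxAr !scalerDr; split; rewrite addrACA.
Qed.

Lemma behavior0 : behavior 0 (0 : signal).
Proof.
exists (fun _ => 0), (fun _ => 0), (fun _ => 0).
split; first by rewrite !(proj2 supervec_eq0) ?col_mx0.
by split=> // t _; split; rewrite !mulmx0 addr0.
Qed.

Lemma behaviorB {x0 : 'cV[R]_nx} {w w' : signal} :
  behavior x0 w -> behavior x0 w' -> behavior 0 (w - w').
Proof.
move=> bw bw'; have := behavior_linear (-1) bw' bw.
by rewrite !scaleN1r addNr addrC.
Qed.

Lemma behaviorD {x0 : 'cV[R]_nx} {w w' : signal} :
  behavior 0 w -> behavior x0 w' -> behavior x0 (w + w').
Proof.
by move=> bw bw'; have := behavior_linear 1 bw bw'; rewrite !scale1r add0r.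
Qed.

Lemma behavior0_colmat_mul N (f : nat -> signal) (c : 'cV[R]_N) :
  (forall k, (k < N)%N -> behavior 0 (f k)) -> behavior 0 (colmat N f *m c).
Proof.
move=> bf; have -> : colmat N f *m c = \sum_(k < N) c k 0 *: f k.
  apply/matrixP => i j; rewrite ord1 !mxE summxE.
  by apply: eq_bigr => k _; rewrite !mxE mulrC.
apply: (big_ind (behavior 0)); [exact: behavior0 | exact: (@behaviorD 0) |].
move=> k _; have := behavior_linear (c k 0) (bf k (ltn_ord k)) behavior0.
by rewrite scaler0 !addr0.
Qed.

Lemma behavior0_input_eq0 (w : signal) :
  behavior 0 w -> usubmx w = 0 -> w = 0.
Proof.
move=> [u [y [x [-> [x_0 sys]]]]]; rewrite col_mxKu => /[dup] u0.
move/supervec_eq0 => u_0.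
have x0 t : (t <= T)%N -> x t = 0.
  elim: t => // t IH ltT; have [-> _] := sys t ltT.
  by rewrite (IH (ltnW ltT)) (u_0 t ltT) !mulmx0 addr0.
rewrite u0 (proj2 supervec_eq0) ?col_mx0 // => t ltT.
have [_ ->] := sys t ltT.
by rewrite (x0 t (ltnW ltT)) (u_0 t ltT) !mulmx0 addr0.
Qed.

Section Experiments.
Variables (x0 : 'cV[R]_nx) (u : nat -> 'cV[R]_(T * nu))
  (y : nat -> 'cV[R]_(T * ny)).
Hypotheses (u0 : u 0%N = 0)
  (rank_u : \rank (colmat (T * nu) (fun k => u k.+1)) = (T * nu)%N)
  (behavior_exp :
     forall k, (k <= T * nu)%N -> behavior x0 (col_mx (u k) (y k))).

Let w0 := col_mx (u 0%N) (y 0%N).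
Let W := colmat (T * nu) (fun k => col_mx (u k.+1) (y k.+1) - w0).

(* A zero-state trajectory d equals W c, where c solves the input equation
   Mu c = usubmx d for the invertible matrix Mu of test inputs. *)
Lemma behavior_experimentsP (w : signal) :
  behavior x0 w <-> exists c, w = W *m c + w0.
Proof.
have bw0 : behavior x0 w0 := behavior_exp 0 (leq0n _).
have bW c : behavior 0 (W *m c).
  apply: behavior0_colmat_mul => k ltk.
  exact: behaviorB (behavior_exp k.+1 ltk) bw0.
split=> [bw | [c ->]]; last exact: behaviorD.
set Mu := colmat (T * nu) (fun k => u k.+1).
have Mu_unit : Mu \in unitmx by rewrite -row_free_unit /row_free rank_u.
have uW : usubmx W = Mu.
  by apply/matrixP => i k; rewrite !mxE !(unsplitK (inl _)) u0 mxE subr0.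
exists (invmx Mu *m usubmx (w - w0)).
apply/eqP; rewrite -subr_eq -subr_eq0; apply/eqP.
apply: behavior0_input_eq0; first exact: behaviorB (behaviorB bw bw0) (bW _).
by rewrite linearB /= -mul_usub_mx uW mulmxA mulmxV // mul1mx subrr.
Qed.

Lemma behavior_spanP (H : 'M[R]_(T * nu + T * ny, T * nu)) :
  (H^T == W^T)%MS -> forall w, behavior x0 w <-> exists a, w = H *m a + w0.
Proof.
case/andP => /submxP [X HX] /submxP [Y WY] w.
have HE : H = W *m X^T by rewrite -[H]trmxK HX trmx_mul trmxK.
have WE : W = H *m Y^T by rewrite -[W]trmxK WY trmx_mul trmxK.
rewrite behavior_experimentsP; split=> -[c ->].
  by exists (Y^T *m c); rewrite mulmxA -WE.
by exists (X^T *m c); rewrite mulmxA -HE.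
Qed.

End Experiments.
End Behavior.
Arguments behavior_spanP {R T nu ny nx A B C D x0 u y}
  u0 rank_u behavior_exp {H}.

Section Euclidean.
Variables (R : realType) (n m : nat).

Lemma enormE (v : 'cV[R]_n) : enorm v = Num.sqrt ((v^T *m v) 0 0).
Proof.
by rewrite /enorm mxE; congr Num.sqrt; apply: eq_bigr => i _; rewrite mxE.
Qed.

Lemma enorm_le_orth_add (H : 'M[R]_(n, m)) (b : 'cV[R]_m) (r : 'cV[R]_n) :
  H^T *m r = 0 -> enorm r <= enorm (H *m b + r).
Proof.
move=> Hr; rewrite !enormE; apply: ler_wsqrtr.
set p := H *m b.
have pr0 : p^T *m r = 0 by rewrite trmx_mul -mulmxA Hr mulmx0.
have rp0 : r^T *m p = 0 by rewrite -[r^T *m p]trmxK trmx_mul trmxK pr0 trmx0.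
rewrite [(p + r)^T]linearD /= mulmxDl !mulmxDr pr0 rp0 addr0 add0r.
rewrite [X in _ <= X]mxE lerDr mxE.
by apply: sumr_ge0 => i _; rewrite mxE -expr2 sqr_ge0.
Qed.

Lemma proj_span_orthonormal (H : 'M[R]_(n, m)) (v : 'cV[R]_n) :
  H^T *m H = 1%:M -> proj_span H v = H *m (H^T *m v).
Proof.
move=> HH; rewrite /proj_span; set P := fun p : 'cV[R]_n => _.
have : P (epsilon (inhabits 0) P).
  apply: epsilon_spec; exists (H *m (H^T *m v)); split; first by eexists.
  by rewrite mulmxBr !mulmxA HH mul1mx subrr.
case=> -[a ->]; rewrite mulmxBr [H^T *m (H *m a)]mulmxA HH mul1mx.
by move/eqP; rewrite subr_eq0 => /eqP ->.
Qed.

End Euclidean.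

Theorem theorem2 (R : realType) (T nu ny nx1 nx2 : nat)
  (A1 : nat -> 'M[R]_nx1) (B1 : nat -> 'M[R]_(nx1, nu))
  (C1 : nat -> 'M[R]_(ny, nx1)) (D1 : nat -> 'M[R]_(ny, nu)) (x10 : 'cV[R]_nx1)
  (A2 : nat -> 'M[R]_nx2) (B2 : nat -> 'M[R]_(nx2, nu))
  (C2 : nat -> 'M[R]_(ny, nx2)) (D2 : nat -> 'M[R]_(ny, nu)) (x20 : 'cV[R]_nx2)
  (* (C1): test experiments *)
  (u1 : nat -> 'cV[R]_(T * nu)) (y1 : nat -> 'cV[R]_(T * ny))
  (u2 : nat -> 'cV[R]_(T * nu)) (y2 : nat -> 'cV[R]_(T * ny))
  (Hu10 : u1 0%N = 0) (Hu20 : u2 0%N = 0)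
  (Hrk1 : \rank (colmat (T * nu) (fun k => u1 k.+1)) = (T * nu)%N)
  (Hrk2 : \rank (colmat (T * nu) (fun k => u2 k.+1)) = (T * nu)%N)
  (Hy1 : forall k, (k <= T * nu)%N ->
     behavior A1 B1 C1 D1 x10 (col_mx (u1 k) (y1 k)))
  (Hy2 : forall k, (k <= T * nu)%N ->
     behavior A2 B2 C2 D2 x20 (col_mx (u2 k) (y2 k)))
  (* (C2) *)
  (H1 H2 : 'M[R]_(T * nu + T * ny, T * nu))
  (HH1 : H1^T *m H1 = 1%:M) (HH2 : H2^T *m H2 = 1%:M)
  (Hspan1 : (H1^T == (colmat (T * nu)
       (fun k => col_mx (u1 k.+1) (y1 k.+1) - col_mx (u1 0%N) (y1 0%N)))^T)%MS)
  (Hspan2 : (H2^T == (colmat (T * nu)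
       (fun k => col_mx (u2 k.+1) (y2 k.+1) - col_mx (u2 0%N) (y2 0%N)))^T)%MS)
  (* (C3) *)
  (HC3 : exists l1 l2 : 'cV[R]_(T * nu),
     H1 *m l1 + H2 *m l2 = col_mx (u2 0%N) (y2 0%N) - col_mx (u1 0%N) (y1 0%N))
  (* (C4) *)
  (U V : 'M[R]_(T * nu)) (s : 'rV[R]_(T * nu))
  (HU : U^T *m U = 1%:M) (HV : V^T *m V = 1%:M)
  (Hsvd : H1^T *m H2 = U *m diag_mx s *m V^T)
  (Hsdec : forall i j : 'I_(T * nu), (i <= j)%N -> s 0 j <= s 0 i)
  (Hspos : forall i : 'I_(T * nu), 0 < s 0 i)
  (wg : 'cV[R]_(T * nu + T * ny))
  (Hwg : behavior A2 B2 C2 D2 x20 wg)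
  (gbar : 'cV[R]_(T * nu))
  (Hgbar : wg = H2 *m V *m gbar + col_mx (u2 0%N) (y2 0%N)) :
  let w10 := col_mx (u1 0%N) (y1 0%N) in
  let w20 := col_mx (u2 0%N) (y2 0%N) in
  let wh := H1 *m U *m diag_mx s *m gbar + proj_span H1 (w20 - w10) + w10 in
  behavior A1 B1 C1 D1 x10 wh /\
  (forall w, behavior A1 B1 C1 D1 x10 w -> enorm (wh - wg) <= enorm (w - wg)).
Proof.
move=> w10 w20 wh.
have beh1P := behavior_spanP Hu10 Hrk1 Hy1 Hspan1.
set b := U *m diag_mx s *m gbar + H1^T *m (w20 - w10).
have whE : wh = H1 *m b + w10.
  by rewrite /wh proj_span_orthonormal // /b mulmxDr !mulmxA.
have H1K x : H1^T *m (H1 *m x) = x by rewrite mulmxA HH1 mul1mx.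
have H1_wg : H1^T *m (H2 *m V *m gbar) = U *m diag_mx s *m gbar.
  by rewrite !mulmxA Hsvd -(mulmxA _ V^T) HV mulmx1.
have orth : H1^T *m (wh - wg) = 0.
  rewrite mulmxBr whE mulmxDr H1K Hgbar mulmxDr H1_wg /b mulmxBr -/w20.
  by rewrite addrA subrK subrr.
split; first by apply/beh1P; exists b.
move=> w /beh1P [a ->].
have -> : H1 *m a + w10 - wg = H1 *m (a - b) + (wh - wg).
  by rewrite whE mulmxBr -!addrA addKr.
exact: enorm_le_orth_add.
Qed.
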